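(* For all $k\ge1$, $n\ge0$, $$b_k(n)=\sum_{\substack{n_1+\cdots+n_k=n\\ n_i\ge0}}\binom{2n}{2n_1\ 2n_2\ \cdots\ 2n_k}.$$
   Context: A labeled graph on a set $V$ of $k$ vertices with $n$ edges has $n$ directed edges labeled $1,\dots,n$, edge $i$ being an ordered pair of vertices in $V\times V$ (loops and multiple edges allowed). The degree of a vertex is the number of edges having it as initial or terminal point, a loop counted twice. The graph is balanced if every vertex has even degree; $b_k(n)$ is the number of balanced labeled graphs on $k$ (fixed, labeled) vertices with $n$ edges. $\binom{2n}{a_1\ \cdots\ a_k}$ denotes the multinomial coefficient. *)

From mathcomp Require Import all_boot.
Set Implicit Arguments. Unset Strict Implicit. Unset Printing Implicit Defensive.

(* A labeled graph on the vertex set 'I_k with n edges: edge i (i : 'I_n,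
   standing for label i+1) is an ordered pair (initial, terminal) of vertices;
   loops and multiple edges are allowed. *)
Definition lgraph (k n : nat) := {ffun 'I_n -> 'I_k * 'I_k}.

Definition degree (k n : nat) (g : lgraph k n) (v : 'I_k) : nat :=
  \sum_(i < n) (((g i).1 == v) + ((g i).2 == v)).

Definition balanced (k n : nat) (g : lgraph k n) : bool :=
  [forall v, ~~ odd (degree g v)].

Definition b (k n : nat) : nat := #|[pred g : lgraph k n | balanced g]|.

Definition multinomial (m : nat) (a : seq nat) : nat :=
  m`! %/ \prod_(x <- a) x`!.

(** A labeled graph with [n] edges on the vertex set ['I_k] is the same thing
    as the word of length [2n] listing the initial points and then the terminal
    points of its edges, and the degree of [v] is the number of occurrences of
    [v] in that word.  Balanced graphs thus correspond to words in which every
    letter occurs an even number of times.  Grouping these words by the halves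
    [n_i] of the letter counts, the words with prescribed counts
    [2n_1, ..., 2n_k] are counted by the multinomial coefficient. *)

From mathcomp Require Import all_boot zify.
Set Implicit Arguments. Unset Strict Implicit. Unset Printing Implicit Defensive.

Lemma card_sum_indicator (T : finType) (P : pred T) :
  #|[pred x | P x]| = \sum_(x : T) P x.
Proof.
by rewrite -sum1_card big_mkcond; apply: eq_bigr => x _; rewrite inE; case: (P x).
Qed.

Section WordsWithCounts.
Variable T : finType.

Definition has_counts (a : T -> nat) (s : seq T) : bool :=
  [forall v, count_mem v s == a v].

Definition decr_at (a : T -> nat) (v : T) (w : T) : nat := a w - (w == v).

Lemma sum_count_mem (s : seq T) : \sum_(v : T) count_mem v s = size s.
Proof.
elim: s => [|x s IHs] /=; first by rewrite big1.
rewrite big_split /= IHs (bigD1 x) //= eqxx big1 ?addn0 // => v /negPf.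
by rewrite eq_sym => ->.
Qed.

Lemma has_counts_cons (a : T -> nat) (v : T) (s : seq T) :
  has_counts a (v :: s) = (0 < a v) && has_counts (decr_at a v) s.
Proof.
have [av0 | av_gt0] := posnP (a v).
  by apply/forallP => /(_ v); rewrite /= eqxx av0.
apply: eq_forallb => w; rewrite /= /decr_at eq_sym.
by case: (eqVneq v w) => [<- | _]; apply/eqP/eqP; lia.
Qed.

Lemma sum_decr_at (a : T -> nat) (v : T) :
  0 < a v -> (\sum_(w : T) decr_at a v w).+1 = \sum_(w : T) a w.
Proof.
move=> av_gt0; rewrite (bigD1 v) // [RHS](bigD1 v) //= /decr_at eqxx.
rewrite -addSn subn1 prednK //; congr addn.
by apply: eq_bigr => w /negPf ->; rewrite subn0.
Qed.

Lemma prod_fact_decr_at (a : T -> nat) (v : T) :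
  0 < a v -> \prod_(w : T) (a w)`! = a v * \prod_(w : T) (decr_at a v w)`!.
Proof.
move=> av_gt0; rewrite (bigD1 v) // [in RHS](bigD1 v) //= /decr_at eqxx subn1.
rewrite mulnA -{1}(prednK av_gt0) factS prednK //; congr muln.
by apply: eq_bigr => w /negPf ->; rewrite subn0.
Qed.

Lemma card_tuple_cons m (P : pred (seq T)) :
  #|[pred t : m.+1.-tuple T | P t]| =
  \sum_(v : T) #|[pred t : m.-tuple T | P (v :: t)]|.
Proof.
rewrite -sum1_card (eq_bigr (fun v => \sum_(t : m.-tuple T | P (v :: t)) 1));
  last by move=> v _; rewrite sum1_card.
rewrite pair_big_dep /=.
rewrite (reindex (fun p : T * m.-tuple T => [tuple of p.1 :: p.2])) //=.
exists (fun t : m.+1.-tuple T => (thead t, [tuple of behead t])).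
  by case=> x t _ /=; rewrite theadE; congr pair; apply: val_inj.
by move=> t _ /=; rewrite [in RHS](tuple_eta t).
Qed.

Lemma card_has_counts m (a : T -> nat) :
  \sum_(v : T) a v = m ->
  #|[pred t : m.-tuple T | has_counts a t]| * \prod_(v : T) (a v)`! = m`!.
Proof.
elim: m a => [|m IHm] a sum_a.
  have a0 v : a v = 0 by apply/eqP; rewrite -leqn0 -sum_a (bigD1 v) ?leq_addr.
  rewrite big1 => [|v _]; last by rewrite a0.
  rewrite muln1 -[RHS](card_tuple 0 T) /=; apply: eq_card => t.
  by rewrite inE tuple0; apply/forallP => v; rewrite a0.
(* Split by the first letter [v]; the words starting with [v] have the counts
   [decr_at a v] after it, and [a v * (a v - 1)`! = (a v)`!]. *)
have cons_term v : #|[pred t : m.-tuple T | has_counts a (v :: t)]|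
                     * \prod_(w : T) (a w)`! = a v * m`!.
  have [av0 | av_gt0] := posnP (a v).
    by rewrite av0 mul0n eq_card0 // => t; rewrite inE has_counts_cons av0.
  have sum_decr : \sum_(w : T) decr_at a v w = m.
    by apply: succn_inj; rewrite sum_decr_at.
  rewrite -(IHm _ sum_decr) (prod_fact_decr_at av_gt0) mulnCA; congr (_ * (_ * _)).
  by apply: eq_card => t; rewrite !inE has_counts_cons av_gt0.
rewrite card_tuple_cons big_distrl (eq_bigr _ (fun v _ => cons_term v)) /=.
by rewrite -big_distrl /= sum_a factS.
Qed.

Lemma card_has_counts_multinomial m (a : T -> nat) :
  \sum_(v : T) a v = m ->
  #|[pred t : m.-tuple T | has_counts a t]| = multinomial m [seq a v | v : T].
Proof.
move=> sum_a; rewrite /multinomial big_map big_enum /= -(card_has_counts sum_a).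
by rewrite mulnK // prodn_gt0 // => v; apply: fact_gt0.
Qed.

End WordsWithCounts.

Section EndpointWord.
Variables k n : nat.

Definition endpoints (g : lgraph k n) : (n + n).-tuple 'I_k :=
  [tuple of [tuple (g i).1 | i < n] ++ [tuple (g i).2 | i < n]].

Lemma count_mem_mktuple (f : 'I_n -> 'I_k) (v : 'I_k) :
  count_mem v [tuple f i | i < n] = \sum_(i < n) (f i == v).
Proof. by rewrite /= -sum1_count big_map big_enum_cond big_mkcond. Qed.

Lemma count_mem_endpoints (g : lgraph k n) (v : 'I_k) :
  count_mem v (endpoints g) = degree g v.
Proof. by rewrite count_cat !count_mem_mktuple /degree big_split. Qed.

Lemma endpoints_bij : bijective endpoints.
Proof.
exists (fun t => [ffun i => (tnth t (lshift n i), tnth t (rshift n i))]) => [g|t].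
  apply/ffunP => i; rewrite ffunE tnth_lshift tnth_rshift !tnth_mktuple.
  by case: (g i).
apply: eq_from_tnth => j; rewrite -(splitK j); case: (split j) => i /=.
  by rewrite tnth_lshift tnth_mktuple ffunE.
by rewrite tnth_rshift tnth_mktuple ffunE.
Qed.

Definition even_counts (s : seq 'I_k) : bool :=
  [forall v, ~~ odd (count_mem v s)].

Lemma card_balanced : b k n = #|[pred t : (n + n).-tuple 'I_k | even_counts t]|.
Proof.
rewrite /b -!sum1_card (reindex endpoints) /=; last exact/onW_bij/endpoints_bij.
apply: eq_bigl => g; apply: eq_forallb => v.
by rewrite count_mem_endpoints.
Qed.

Definition half_counts (s : seq 'I_k) : {ffun 'I_k -> 'I_n.+1} :=
  [ffun v => inord (count_mem v s)./2].

Lemma half_countsE (s : seq 'I_k) (v : 'I_k) :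
  size s = n + n -> (half_counts s v : nat) = (count_mem v s)./2.
Proof.
move=> size_s; rewrite ffunE inordK // ltnS.
have : count_mem v s <= n + n.
  by rewrite -size_s -sum_count_mem (bigD1 v) ?leq_addr.
by move/half_leq; rewrite addnn doubleK.
Qed.

Lemma double_half_counts (s : seq 'I_k) (v : 'I_k) :
  size s = n + n -> ~~ odd (count_mem v s) -> count_mem v s = 2 * half_counts s v.
Proof.
move=> size_s even_v; rewrite half_countsE // mul2n.
by rewrite -[LHS]odd_double_half (negbTE even_v).
Qed.

(* The whole sum collapses onto the single term [c = half_counts s]. *)
Lemma sum_has_double_counts (s : seq 'I_k) : size s = n + n ->
  \sum_(c : {ffun 'I_k -> 'I_n.+1} | \sum_(i < k) (c i : nat) == n)
     has_counts (fun v => 2 * c v) s = even_counts s.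
Proof.
move=> size_s.
have double_counts (c : {ffun 'I_k -> 'I_n.+1}) :
    has_counts (fun v => 2 * c v) s = (c == half_counts s) && even_counts s.
  apply/forallP/andP => [cnt | [/eqP -> /forallP ev] v].
    have ev : even_counts s by apply/forallP => v; rewrite (eqP (cnt v)) oddM.
    split=> //; apply/eqP/ffunP => v; apply: val_inj.
    by rewrite /= half_countsE // (eqP (cnt v)) mul2n doubleK.
  by rewrite -double_half_counts.
under eq_bigr => c _ do rewrite double_counts.
case: (boolP (even_counts s)) => [ev | _]; last first.
  by rewrite big1 // => c _; rewrite andbF.
rewrite (bigD1 (half_counts s)) /=.
  by rewrite eqxx big1 // => c /andP [_ /negPf ->].
apply/eqP/double_inj; rewrite -[RHS]addnn -size_s -sum_count_mem -mul2n big_distrr.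
by apply: eq_bigr => v _; rewrite [RHS]double_half_counts // (forallP ev).
Qed.
End EndpointWord.

Theorem mainTheorem13 (k n : nat) (hk : 1 <= k) :
  b k n =
  \sum_(c : {ffun 'I_k -> 'I_n.+1} | \sum_(i < k) (c i : nat) == n)
     multinomial (2 * n) [seq 2 * (c i : nat) | i : 'I_k].
Proof.
rewrite card_balanced card_sum_indicator.
under eq_bigr => t _ do rewrite -(sum_has_double_counts (size_tuple t)).
rewrite exchange_big /=; apply: eq_bigr => c /eqP sum_c.
rewrite -card_sum_indicator card_has_counts_multinomial ?addnn ?mul2n //.
by rewrite -big_distrr /= sum_c mul2n.
Qed.
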